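(* Let $\triangle$ be an apexed triangle and $f_\triangle:\mathbb{R}^2\to\mathbb{R}$ the associated distance function. Then for all $x_1,x_2\in\mathbb{R}^2$, $|f_\triangle(x_1)-f_\triangle(x_2)|\le\|x_1-x_2\|$.
   Context: $\|\cdot\|$ is the Euclidean norm and $\langle\cdot,\cdot\rangle$ the Euclidean inner product in $\mathbb{R}^2$. An apexed triangle $\triangle$ (in a simple polygon $P$ with sites $S$ and geodesic distance $d$) is a triangle with corners $a$ (apex), $b,c$ (so $0<\angle bac<\pi$), together with a site $s$ (definer); only $a,b,c$ and the constant $d(a,s)$ matter here. Let $u_1=(b-a)/\|b-a\|$ and $u_2=(c-a)/\|c-a\|$. Let $R_{in}=\{a+\lambda u_1+\mu u_2:\lambda,\mu\ge0\}$. Let $L=\{x\notin R_{in}:\langle x-a,u_1\rangle\ge\langle x-a,u_2\rangle\}$ and $R=\{x\notin R_{in}:\langle x-a,u_2\rangle>\langle x-a,u_1\rangle\}$ (so $L$ and $R$ are separated by the halfline from $a$ bisecting the angle at $a$ that points away from $\triangle$). Split $L$ into $L_{top}=\{x\in L:\langle x-a,u_1\rangle<0\}$ and $L_{side}=L\setminus L_{top}$, and similarly $R_{top}=\{x\in R:\langle x-a,u_2\rangle<0\}$, $R_{side}=R\setminus R_{top}$. For $x\in L$ let $\hat x$ be the orthogonal projection of $x$ onto the line through $a$ with direction $u_1$; for $x\in R$ let $\hat x$ be the orthogonal projection onto the line through $a$ with direction $u_2$; for $x\in R_{in}$ let $\hat x=x$. Define $f_\triangle(x)=d(a,s)-\|\hat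 x-a\|$ if $x\in L_{top}\cup R_{top}$, and $f_\triangle(x)=d(a,s)+\|\hat x-a\|$ otherwise. *)

From Stdlib Require Import Reals Lra ClassicalDescription.
Open Scope R_scope.

Definition pt := (R * R)%type.

Definition vadd (x y : pt) : pt := (fst x + fst y, snd x + snd y).
Definition vsub (x y : pt) : pt := (fst x - fst y, snd x - snd y).
Definition vscale (k : R) (x : pt) : pt := (k * fst x, k * snd x).
Definition dot (x y : pt) : R := fst x * fst y + snd x * snd y.
Definition norm (x : pt) : R := sqrt (dot x x).

Definition unitv (a b : pt) : pt := vscale (/ norm (vsub b a)) (vsub b a).

Definition angle (b a c : pt) : R := acos (dot (unitv a b) (unitv a c)).

Definition in_Rin (a b c x : pt) : Prop :=
  exists lam mu : R, 0 <= lam /\ 0 <= mu /\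
    x = vadd a (vadd (vscale lam (unitv a b)) (vscale mu (unitv a c))).

Definition in_L (a b c x : pt) : Prop :=
  ~ in_Rin a b c x /\ dot (vsub x a) (unitv a b) >= dot (vsub x a) (unitv a c).
Definition in_R (a b c x : pt) : Prop :=
  ~ in_Rin a b c x /\ dot (vsub x a) (unitv a c) > dot (vsub x a) (unitv a b).
Definition in_Ltop (a b c x : pt) : Prop :=
  in_L a b c x /\ dot (vsub x a) (unitv a b) < 0.
Definition in_Rtop (a b c x : pt) : Prop :=
  in_R a b c x /\ dot (vsub x a) (unitv a c) < 0.

Definition proj_line (a u x : pt) : pt := vadd a (vscale (dot (vsub x a) u) u).

Definition hat (a b c x : pt) : pt :=
  if excluded_middle_informative (in_L a b c x) then proj_line a (unitv a b) x
  else if excluded_middle_informative (in_R a b c x) then proj_line a (unitv a c) x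
  else x.

(* f_triangle, where D = d(a,s) *)
Definition f_tri (a b c : pt) (D : R) (x : pt) : R :=
  if excluded_middle_informative (in_Ltop a b c x \/ in_Rtop a b c x)
  then D - norm (vsub (hat a b c x) a)
  else D + norm (vsub (hat a b c x) a).

(* Off the cone [R_in] the function [f_tri - D] is [max(<x-a,u1>, <x-a,u2>)] and inside
   it is [|x-a|]; in both cases it equals the maximum of [<x-a,v>] over the unit vectors [v]
   of the cone (outside the cone the maximum is attained on a boundary ray, a planar
   computation in the basis [u1, u2]).  A pointwise maximum of 1-Lipschitz linear forms
   is 1-Lipschitz. *)

From Stdlib Require Import Reals Lra Psatz ClassicalDescription.
Open Scope R_scope.

Definition lincomb (l m : R) (u1 u2 : pt) : pt := vadd (vscale l u1) (vscale m u2).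

Ltac pt_ring :=
  repeat match goal with p : pt |- _ => destruct p end;
  unfold lincomb, dot, vsub, vadd, vscale; simpl; first [ring | f_equal; ring].

Lemma dot_lincomb_l (l m : R) (u1 u2 y : pt) :
  dot (lincomb l m u1 u2) y = l * dot u1 y + m * dot u2 y.
Proof. pt_ring. Qed.

Lemma dot_lincomb_r (l m : R) (u1 u2 y : pt) :
  dot y (lincomb l m u1 u2) = l * dot y u1 + m * dot y u2.
Proof. pt_ring. Qed.

Lemma dot_comm (x y : pt) : dot x y = dot y x.
Proof. pt_ring. Qed.

Lemma dot_vsub_l (x y v : pt) : dot (vsub x y) v = dot x v - dot y v.
Proof. pt_ring. Qed.

Lemma lincomb_scale (k l m : R) (u1 u2 : pt) :
  lincomb (k * l) (k * m) u1 u2 = vscale k (lincomb l m u1 u2).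
Proof. pt_ring. Qed.

Lemma dot_vscale_l (k : R) (x y : pt) : dot (vscale k x) y = k * dot x y.
Proof. pt_ring. Qed.

Lemma dot_vscale_r (k : R) (x y : pt) : dot x (vscale k y) = k * dot x y.
Proof. pt_ring. Qed.

Lemma dot_0_l (v : pt) : dot (0, 0) v = 0.
Proof. pt_ring. Qed.

Lemma vsub_vadd_cancel (a y : pt) : vsub (vadd a y) a = y.
Proof. pt_ring. Qed.

Lemma vadd_vsub_cancel (a x : pt) : vadd a (vsub x a) = x.
Proof. pt_ring. Qed.

Lemma lincomb_1_0 (u1 u2 : pt) : lincomb 1 0 u1 u2 = u1.
Proof. pt_ring. Qed.

Lemma lincomb_0_1 (u1 u2 : pt) : lincomb 0 1 u1 u2 = u2.
Proof. pt_ring. Qed.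

Lemma dot_self_ge0 (x : pt) : 0 <= dot x x.
Proof. destruct x; unfold dot; simpl; nra. Qed.

Lemma dot_self_eq0 (x : pt) : dot x x = 0 -> x = (0, 0).
Proof. destruct x as [x1 x2]; unfold dot; simpl; intro H. f_equal; nra. Qed.

Lemma norm_vsub_sym (x y : pt) : norm (vsub x y) = norm (vsub y x).
Proof. unfold norm; f_equal; pt_ring. Qed.

Lemma dot_le_norm (y v : pt) : dot v v = 1 -> dot y v <= norm y.
Proof.
intro Hv; unfold norm.
destruct (Rle_dec (dot y v) 0).
- pose proof (sqrt_pos (dot y y)); lra.
- rewrite <- (sqrt_Rsqr (dot y v)) by lra. apply sqrt_le_1_alt.
  destruct y as [y1 y2], v as [v1 v2]; unfold Rsqr, dot in *; simpl in *.
  pose proof (Rle_0_sqr (y1 * v2 - y2 * v1)); unfold Rsqr in *; nra.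
Qed.

Lemma unitv_unit (a b : pt) : b <> a -> dot (unitv a b) (unitv a b) = 1.
Proof.
intro Hba; unfold unitv, norm.
set (w := vsub b a).
assert (Hw : 0 < dot w w).
{ destruct (Rle_lt_or_eq_dec _ _ (dot_self_ge0 w)) as [h | h]; [exact h |].
  exfalso; apply Hba. pose proof (dot_self_eq0 w (eq_sym h)) as E.
  destruct a, b; unfold w, vsub in E; simpl in E; injection E; intros; f_equal; lra. }
pose proof (sqrt_sqrt _ (Rlt_le _ _ Hw)) as Hs. pose proof (sqrt_lt_R0 _ Hw).
set (n := sqrt (dot w w)) in *; clearbody w n.
transitivity (/ n * / n * dot w w); [pt_ring | rewrite <- Hs; field; lra].
Qed.

Lemma norm_proj_line (a u x : pt) :
  dot u u = 1 -> norm (vsub (proj_line a u x) a) = Rabs (dot (vsub x a) u).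
Proof.
intro Hu; unfold proj_line, norm. rewrite <- sqrt_Rsqr_abs. f_equal.
set (p := dot (vsub x a) u); clearbody p.
transitivity (p * p * dot u u); [pt_ring | rewrite Hu; unfold Rsqr; ring].
Qed.

Lemma unit_cone_coeff_ge (c l m : R) :
  -1 <= c <= 1 -> 0 <= l -> 0 <= m -> l*l + m*m + 2*l*m*c = 1 -> c <= l + m*c.
Proof.
intros Hc Hl Hm H.
destruct (Rle_dec ((1-m)*c) l) as [Hle | Hlt]; [lra | exfalso].
set (L := (1-m)*c) in *.
(* With [q t := t*t + m*m + 2*t*m*c], [q l = 1]; by [E], [l < L] puts [q L] on the side of [1]
   that [HL] forbids. *)
assert (HL : L*L + m*m + 2*L*m*c - 1 = (1 - c*c) * (m*m - 1)) by (unfold L; ring).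
assert (E : (L*L + m*m + 2*L*m*c) - (l*l + m*m + 2*l*m*c) = (L - l) * (L + l + 2*m*c))
  by ring.
assert (HLc : L + m*c = c) by (unfold L; ring).
assert (0 <= 1 - c*c) by nra.
destruct (Rle_dec c 0), (Rle_dec m 1).
- assert (0 <= (1-m) * (-c)) by (apply Rmult_le_pos; lra). unfold L in Hlt; lra.
- assert ((L - l) * (L + l + 2*m*c) < 0) by (apply Rmult_pos_neg; lra).
  assert (0 <= (1 - c*c) * (m*m - 1)) by (apply Rmult_le_pos; nra). lra.
- assert (0 <= m*c) by (apply Rmult_le_pos; lra).
  assert ((L - l) * (L + l + 2*m*c) > 0) by (apply Rmult_gt_0_compat; lra).
  assert (0 <= (1 - c*c) * (1 - m*m)) by (apply Rmult_le_pos; nra). lra.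
- assert (0 <= (m-1) * c) by (apply Rmult_le_pos; lra). unfold L in Hlt; lra.
Qed.

Lemma unit_cone_coeff_le (c l m : R) :
  -1 <= c <= 1 -> 0 <= l -> 0 <= m -> l*l + m*m + 2*l*m*c = 1 -> l + m*c <= 1.
Proof.
intros Hc Hl Hm H.
assert (E : (l + m*c) * (l + m*c) = 1 - m*m*(1 - c*c)) by lra.
assert (0 <= m*m*(1 - c*c)) by (apply Rmult_le_pos; nra).
nra.
Qed.

Lemma unit_cone_coeff_sum (c l m : R) :
  -1 <= c <= 1 -> 0 <= l -> 0 <= m -> l*l + m*m + 2*l*m*c = 1 -> 1 <= l + m.
Proof.
intros Hc Hl Hm H.
assert (E : (l + m) * (l + m) = 1 + 2*l*m*(1 - c)) by lra.
assert (0 <= l*m*(1 - c)) by (apply Rmult_le_pos; [apply Rmult_le_pos |]; lra).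
nra.
Qed.

(* The points [(a1, a2)] form the triangle with vertices [(1, c)], [(c, 1)], [(1, 1)];
   a linear form is maximal at a vertex, and [(1, 1)] loses when a weight is negative. *)
Lemma linear_le_max_on_triangle (al be c a1 a2 : R) :
  -1 <= c <= 1 -> c <= a1 <= 1 -> c <= a2 <= 1 -> 1 + c <= a1 + a2 ->
  al < 0 \/ be < 0 -> al*a1 + be*a2 <= Rmax (al + be*c) (al*c + be).
Proof.
intros Hc H1 H2 H12 Hab.
destruct (Rle_dec 0 be), (Rle_dec 0 al).
- lra.
- assert (al*a1 <= al*c) by nra. assert (be*a2 <= be) by nra.
  eapply Rle_trans; [| apply Rmax_r]. lra.
- assert (be*a2 <= be*c) by nra. assert (al*a1 <= al) by nra.
  eapply Rle_trans; [| apply Rmax_l]. lra.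
- destruct (Rle_dec al be).
  + assert (al*(a2 - c) <= be*(a2 - c)) by nra.
    assert (be*(a1 - c + a2 - c) <= be*(1 - c)) by nra.
    eapply Rle_trans; [| apply Rmax_r]. nra.
  + assert (be*(a1 - c) <= al*(a1 - c)) by nra.
    assert (al*(a1 - c + a2 - c) <= al*(1 - c)) by nra.
    eapply Rle_trans; [| apply Rmax_l]. nra.
Qed.

Lemma lincomb_basis (u1 u2 y : pt) :
  dot u1 u1 = 1 -> dot u2 u2 = 1 -> -1 < dot u1 u2 < 1 ->
  exists al be, y = lincomb al be u1 u2.
Proof.
destruct u1 as [p1 p2], u2 as [q1 q2], y as [y1 y2]; unfold dot; simpl.
intros U1 U2 Hc.
set (s := p1*q2 - p2*q1).
assert (Hs : s*s = 1 - (p1*q1 + p2*q2) * (p1*q1 + p2*q2)).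
{ transitivity ((p1*p1 + p2*p2) * (q1*q1 + q2*q2) - (p1*q1 + p2*q2) * (p1*q1 + p2*q2));
    [unfold s; ring | rewrite U1, U2; ring]. }
assert (Hs0 : s <> 0) by (intro E; rewrite E in Hs; nra).
exists ((y1*q2 - y2*q1) / s), ((p1*y2 - p2*y1) / s).
unfold lincomb, vadd, vscale, s in *; simpl; f_equal; field; auto.
Qed.

Lemma dot_unit_cone_le_max (u1 u2 y : pt) (l m : R) :
  dot u1 u1 = 1 -> dot u2 u2 = 1 -> -1 < dot u1 u2 < 1 ->
  0 <= l -> 0 <= m -> dot (lincomb l m u1 u2) (lincomb l m u1 u2) = 1 ->
  ~ (exists l' m', 0 <= l' /\ 0 <= m' /\ y = lincomb l' m' u1 u2) ->
  dot y (lincomb l m u1 u2) <= Rmax (dot y u1) (dot y u2).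
Proof.
intros U1 U2 Hc Hl Hm Hv Hout.
destruct (lincomb_basis u1 u2 y U1 U2 Hc) as [al [be ->]].
assert (Hab : al < 0 \/ be < 0).
{ destruct (Rlt_dec al 0); [now left |]. destruct (Rlt_dec be 0); [now right |].
  exfalso; apply Hout; exists al, be; repeat split; lra. }
rewrite !dot_lincomb_l, !dot_lincomb_r, U1, U2, (dot_comm u2 u1) in *.
set (c := dot u1 u2) in *.
assert (Hq : l*l + m*m + 2*l*m*c = 1) by lra.
assert (Hq' : m*m + l*l + 2*m*l*c = 1) by lra.
pose proof (unit_cone_coeff_ge c l m ltac:(lra) Hl Hm Hq).
pose proof (unit_cone_coeff_le c l m ltac:(lra) Hl Hm Hq).
pose proof (unit_cone_coeff_ge c m l ltac:(lra) Hm Hl Hq').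
pose proof (unit_cone_coeff_le c m l ltac:(lra) Hm Hl Hq').
pose proof (unit_cone_coeff_sum c l m ltac:(lra) Hl Hm Hq).
replace (al * (l * 1 + m * c) + be * (l * c + m * 1))
  with (al * (l + m*c) + be * (m + l*c)) by ring.
replace (al * 1 + be * c) with (al + be * c) by ring.
replace (al * c + be * 1) with (al * c + be) by ring.
apply linear_le_max_on_triangle; try lra.
nra.
Qed.

Definition in_unit_arc (u1 u2 v : pt) : Prop :=
  exists l m, 0 <= l /\ 0 <= m /\ v = lincomb l m u1 u2 /\ dot v v = 1.

Lemma max_dot_lipschitz (S : pt -> Prop) (g : pt -> R) (a : pt) :
  (forall v, S v -> dot v v = 1) ->
  (forall x v, S v -> dot (vsub x a) v <= g x) ->
  (forall x, exists v, S v /\ g x = dot (vsub x a) v) ->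
  forall x1 x2, Rabs (g x1 - g x2) <= norm (vsub x1 x2).
Proof.
intros Hunit Hle Hatt.
assert (Hone : forall x1 x2, g x1 - g x2 <= norm (vsub x1 x2)).
{ intros x1 x2. destruct (Hatt x1) as [v [Sv ->]].
  pose proof (Hle x2 v Sv) as H2. pose proof (dot_le_norm (vsub x1 x2) v (Hunit v Sv)) as H12.
  rewrite !dot_vsub_l in H2, H12 |- *. lra. }
intros x1 x2. pose proof (Hone x1 x2). pose proof (Hone x2 x1) as H21.
rewrite norm_vsub_sym in H21. apply Rabs_le; lra.
Qed.

Lemma signed_abs (P : Prop) (D p : R) :
  (P <-> p < 0) ->
  (if excluded_middle_informative P then D - Rabs p else D + Rabs p) = D + p.
Proof.
intro HP; destruct (excluded_middle_informative P) as [H | H].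
- rewrite Rabs_left by (now apply HP). ring.
- rewrite Rabs_right; [ring |]. destruct (Rlt_dec p 0); [tauto | lra].
Qed.

Lemma cos_angle_bounds (a b c : pt) :
  0 < angle b a c < PI -> -1 < dot (unitv a b) (unitv a c) < 1.
Proof.
unfold angle, acos; intro H.
destruct (Rle_dec _ (-1)); [lra |]. destruct (Rle_dec 1 _); [lra |]. lra.
Qed.

Section ApexedTriangle.
Variables a b c : pt.
Hypothesis Hb : b <> a.
Hypothesis Hc : c <> a.

Local Notation u1 := (unitv a b).
Local Notation u2 := (unitv a c).

Lemma in_Rin_lincomb (x : pt) :
  in_Rin a b c x <-> exists l m, 0 <= l /\ 0 <= m /\ vsub x a = lincomb l m u1 u2.
Proof.
unfold in_Rin; split; intros [l [m [Hl [Hm E]]]]; exists l, m; repeat split; auto.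
- now rewrite E, vsub_vadd_cancel.
- now rewrite <- (vadd_vsub_cancel a x) at 1; rewrite E.
Qed.

Definition arc_support (x : pt) : R :=
  if excluded_middle_informative (in_Rin a b c x) then norm (vsub x a)
  else Rmax (dot (vsub x a) u1) (dot (vsub x a) u2).

Lemma arc_support_ge (x v : pt) :
  -1 < dot u1 u2 < 1 -> in_unit_arc u1 u2 v -> dot (vsub x a) v <= arc_support x.
Proof.
intros Hcos [l [m [Hl [Hm [-> Hv]]]]].
unfold arc_support; destruct (excluded_middle_informative _) as [Hin | Hout].
- exact (dot_le_norm _ _ Hv).
- apply dot_unit_cone_le_max; auto using unitv_unit.
  now rewrite <- in_Rin_lincomb.
Qed.

Lemma arc_support_attained (x : pt) :
  exists v, in_unit_arc u1 u2 v /\ arc_support x = dot (vsub x a) v.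
Proof.
pose proof (unitv_unit a b Hb) as U1. pose proof (unitv_unit a c Hc) as U2.
assert (Hu1 : in_unit_arc u1 u2 u1)
  by (exists 1, 0; rewrite lincomb_1_0; repeat split; auto; lra).
assert (Hu2 : in_unit_arc u1 u2 u2)
  by (exists 0, 1; rewrite lincomb_0_1; repeat split; auto; lra).
unfold arc_support; destruct (excluded_middle_informative _) as [Hin | Hout].
- apply in_Rin_lincomb in Hin as [l [m [Hl [Hm E]]]].
  set (y := vsub x a) in *.
  pose proof (sqrt_sqrt _ (dot_self_ge0 y)) as Hs; fold (norm y) in Hs.
  destruct (Rle_lt_or_eq_dec 0 (norm y) (sqrt_pos _)) as [Hn | Hn].
  + exists (vscale (/ norm y) y). split.
    * exists (/ norm y * l), (/ norm y * m).
      rewrite lincomb_scale, <- E. repeat split.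
      -- apply Rmult_le_pos; auto. left; apply Rinv_0_lt_compat; auto.
      -- apply Rmult_le_pos; auto. left; apply Rinv_0_lt_compat; auto.
      -- rewrite dot_vscale_l, dot_vscale_r, <- Hs. field; lra.
    * rewrite dot_vscale_r, <- Hs. field; lra.
  + exists u1. split; auto.
    rewrite <- Hn, (dot_self_eq0 y) by (rewrite <- Hs, <- Hn; ring).
    now rewrite dot_0_l.
- unfold Rmax; destruct (Rle_dec _ _); [exists u2 | exists u1]; auto.
Qed.

Lemma f_tri_arc_support (D : R) (x : pt) : f_tri a b c D x = D + arc_support x.
Proof.
pose proof (unitv_unit a b Hb) as U1. pose proof (unitv_unit a c Hc) as U2.
set (p1 := dot (vsub x a) u1). set (p2 := dot (vsub x a) u2).
assert (HL : in_L a b c x <-> ~ in_Rin a b c x /\ p2 <= p1)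
  by (unfold in_L; fold p1 p2; split; intros [? ?]; split; auto; lra).
assert (HR : in_R a b c x <-> ~ in_Rin a b c x /\ p1 < p2)
  by (unfold in_R; fold p1 p2; split; intros [? ?]; split; auto; lra).
unfold f_tri, arc_support, hat; fold p1 p2.
destruct (excluded_middle_informative (in_Rin a b c x)) as [Hin | Hout].
- destruct (excluded_middle_informative (in_L a b c x)) as [[]%HL | _]; [tauto |].
  destruct (excluded_middle_informative (in_R a b c x)) as [[]%HR | _]; [tauto |].
  destruct (excluded_middle_informative _) as [[[[]%HL _] | [[]%HR _]] | _]; tauto.
- destruct (Rle_dec p2 p1).
  + destruct (excluded_middle_informative (in_L a b c x)) as [_ | []]; [| now apply HL].
    rewrite Rmax_left, norm_proj_line by (exact U1 || lra).
    apply signed_abs. unfold in_Ltop, in_Rtop; rewrite HL, HR; fold p1 p2. intuition lra.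
  + destruct (excluded_middle_informative (in_L a b c x)) as [[_ ?]%HL | _]; [lra |].
    destruct (excluded_middle_informative (in_R a b c x)) as [_ | []]; [| apply HR; split; auto; lra].
    rewrite Rmax_right, norm_proj_line by (exact U2 || lra).
    apply signed_abs. unfold in_Ltop, in_Rtop; rewrite HL, HR; fold p1 p2. intuition lra.
Qed.

End ApexedTriangle.

Theorem mainTheorem8 (a b c : pt) (D : R) :
  b <> a -> c <> a -> 0 < angle b a c < PI -> 0 <= D ->
  forall x1 x2 : pt,
    Rabs (f_tri a b c D x1 - f_tri a b c D x2) <= norm (vsub x1 x2).
Proof.
intros Hb Hc Hangle _ x1 x2.
rewrite !(f_tri_arc_support a b c Hb Hc).
replace (D + arc_support a b c x1 - (D + arc_support a b c x2))
  with (arc_support a b c x1 - arc_support a b c x2) by ring.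
apply (max_dot_lipschitz (in_unit_arc (unitv a b) (unitv a c)) _ a).
- now intros v [l [m [_ [_ [_ Hv]]]]].
- intros x v; apply (arc_support_ge a b c Hb Hc), cos_angle_bounds, Hangle.
- exact (arc_support_attained a b c Hb Hc).
Qed.
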